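(* For every pair of non-uniformly stable matchings $\mu,\sigma$ in $G$, both $\mu\wedge\sigma$ and $\mu\vee\sigma$ are non-uniformly stable matchings in $G$.
   Context: Setting: $G=(V,E)$ is a finite simple bipartite graph with $V=V_1\sqcup V_2$, every edge joining a vertex of $V_1$ to a vertex of $V_2$; an edge is identified with the set of its two endpoints. $E$ is partitioned into $E_1,E_2$. For $F\subseteq E$ and $v\in V$, $F(v)$ is the set of edges of $F$ incident to $v$. For every $v\in V$ there is a transitive and complete binary relation $\succsim_v$ on $E(v)\cup\{\emptyset\}$ with $e\succsim_v\emptyset$ and $\emptyset\not\succsim_v e$ for all $e\in E(v)$; $e\succ_v f$ means $e\succsim_v f$ and $f\not\succsim_v e$. A matching is $\mu\subseteq E$ with $|\mu(v)|\le1$ for all $v$; $\mu(v)$ denotes the edge of $\mu$ at $v$, or $\emptyset$. An edge $e\in E\setminus\mu$ weakly blocks $\mu$ if $e\succsim_v\mu(v)$ for every $v\in e$; it strongly blocks $\mu$ if additionally $e\succ_w\mu(w)$ for some $w\in e$. $\mu$ is non-uniformly stable if no edge of $E_1\setminus\mu$ weakly blocks $\mu$ and no edge of $E_2\setminus\mu$ strongly blocks $\mu$. For non-uniformly stable $\mu,\sigma$, define for each $v\in V_1$: $(\mu\wedge\sigma)(v)=\mu(v)$ if $\mu(v)\succsim_v\sigma(v)$ and $=\sigma(v)$ if $\sigma(v)\succ_v\mu(v)$; $(\mu\vee\sigma)(v)=\mu(v)$ if $\sigma(v)\succsim_v\mu(v)$ and $=\sigma(v)$ if $\mu(v)\succ_v\sigma(v)$.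 Then $\mu\wedge\sigma$ (resp. $\mu\vee\sigma$) is the set $\{(\mu\wedge\sigma)(v): v\in V_1\}\setminus\{\emptyset\}$ (resp. with $\vee$), a subset of $\mu\cup\sigma$. *)

From mathcomp Require Import all_boot.
Set Implicit Arguments. Unset Strict Implicit. Unset Printing Implicit Defensive.

Section Defs.
Variable V : finType.

(* side v = true  <->  v \in V_1 ; side v = false <-> v \in V_2.
   An edge is the 2-set of its endpoints. *)
Definition bipartite_edges (side : V -> bool) (E : {set {set V}}) : Prop :=
  forall e, e \in E -> exists u w, [/\ side u, ~~ side w & e = [set u; w]].

(* Preferences: pref v x y means x ≿_v y, where None stands for ∅
   and Some e for the edge e. Only values on E(v) ∪ {∅} matter. *)
Definition in_dom (E : {set {set V}}) (v : V) (x : option {set V}) : bool :=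
  if x is Some e then (e \in E) && (v \in e) else true.

Definition pref_ok (E : {set {set V}}) (pref : V -> option {set V} -> option {set V} -> bool) : Prop :=
  forall v,
  [/\ (forall x y z, in_dom E v x -> in_dom E v y -> in_dom E v z ->
         pref v x y -> pref v y z -> pref v x z),
      (forall x y, in_dom E v x -> in_dom E v y -> pref v x y || pref v y x)
    & (forall e, e \in E -> v \in e -> pref v (Some e) None && ~~ pref v None (Some e))].

Definition strict_pref (pref : V -> option {set V} -> option {set V} -> bool) v x y :=
  pref v x y && ~~ pref v y x.

Definition is_matching (E mu : {set {set V}}) : Prop :=
  mu \subset E /\ forall v, #|[set e in mu | v \in e]| <= 1.

Definition mate (mu : {set {set V}}) (v : V) : option {set V} :=
  [pick e in mu | v \in e].

Definition weakly_blocks (pref : V -> option {set V} -> option {set V} -> bool) (E mu : {set {set V}}) (e : {set V}) : Prop :=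
  [/\ e \in E, e \notin mu & forall v, v \in e -> pref v (Some e) (mate mu v)].

Definition strongly_blocks (pref : V -> option {set V} -> option {set V} -> bool) (E mu : {set {set V}}) (e : {set V}) : Prop :=
  weakly_blocks pref E mu e /\
  exists w, w \in e /\ strict_pref pref w (Some e) (mate mu w).

Definition nonuniformly_stable (pref : V -> option {set V} -> option {set V} -> bool) (E E1 mu : {set {set V}}) : Prop :=
  [/\ is_matching E mu,
      (forall e, e \in E1 -> ~ weakly_blocks pref E mu e)
    & (forall e, e \in E :\: E1 -> ~ strongly_blocks pref E mu e)].

Definition meet_at (pref : V -> option {set V} -> option {set V} -> bool) (mu sigma : {set {set V}}) v : option {set V} :=
  if pref v (mate mu v) (mate sigma v) then mate mu v else mate sigma v.

Definition join_at (pref : V -> option {set V} -> option {set V} -> bool) (mu sigma : {set {set V}}) v : option {set V} :=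
  if pref v (mate sigma v) (mate mu v) then mate mu v else mate sigma v.

Definition meetM (pref : V -> option {set V} -> option {set V} -> bool) side (mu sigma : {set {set V}}) : {set {set V}} :=
  [set e | [exists v, side v && (meet_at pref mu sigma v == Some e)]].

Definition joinM (pref : V -> option {set V} -> option {set V} -> bool) side (mu sigma : {set {set V}}) : {set {set V}} :=
  [set e | [exists v, side v && (join_at pref mu sigma v == Some e)]].

End Defs.

From mathcomp Require Import all_boot.
Set Implicit Arguments. Unset Strict Implicit. Unset Printing Implicit Defensive.

(* If v strictly prefers sigma(v) to mu(v), the other endpoint of sigma(v)
   strictly prefers its mu-mate, for otherwise sigma(v) would strongly block mu.
   So taking sigma-partners maps the vertices strictly preferring sigma injectively
   into those strictly preferring mu, and taking mu-partners maps back; by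
   finiteness both maps are bijections.  Hence along every edge of mu or sigma,
   one endpoint strictly prefers sigma exactly when the other strictly prefers mu.
   This is what makes "the better of the two mates" on one side and "the worse of
   the two mates" on the other side agree on every edge, so that they define a
   matching.  In it every vertex keeps its mu-mate or its sigma-mate, and one side
   does at least as well as in both; an edge blocking it would therefore block
   mu or sigma as well. *)

Lemma imset_eq_of_inj_in (T : finType) (f g : T -> T) (A B : {set T}) :
    {in A &, injective f} -> f @: A \subset B ->
    {in B &, injective g} -> g @: B \subset A ->
  f @: A = B.
Proof.
move=> injf sfAB injg sgBA; apply/eqP; rewrite eqEcard sfAB card_in_imset //=.
by rewrite -(card_in_imset injg) subset_leq_card.
Qed.

Lemma set2_other (T : finType) (x y z : T) : z \in [set x; y] -> z != x -> z = y.
Proof. by case/set2P=> [->|->]; rewrite ?eqxx. Qed.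

Section NonUniformStability.
Variable V : finType.
Variable side : V -> bool.
Variables E E1 : {set {set V}}.
Variable pref : V -> option {set V} -> option {set V} -> bool.
Hypothesis Hbip : bipartite_edges side E.
Hypothesis Hpref : pref_ok E pref.

Implicit Types (M a b mu sigma : {set {set V}}) (e g : {set V}) (s : pred V).
Local Notation dom := (in_dom E).
Local Notation strict := (strict_pref pref).
Local Notation stable := (nonuniformly_stable pref E E1).

Lemma other_endpoint s e x : bipartite_edges s E -> e \in E -> x \in e ->
  exists y, s y = ~~ s x /\ e = [set x; y].
Proof.
move=> bip /bip[u [w [su sw ->]]] /set2P[->|->].
- by exists w; rewrite su (negbTE sw).
- by exists u; rewrite su (negbTE sw) setUC.
Qed.

Lemma bipartite_sideN s e x y : bipartite_edges s E -> e \in E ->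
  x \in e -> y \in e -> y != x -> s y = ~~ s x.
Proof.
move=> bip eE xe + nyx; have [z [sz ->]] := other_endpoint bip eE xe.
by move/set2_other/(_ nyx) ->.
Qed.

Lemma bipartite_edgesN : bipartite_edges (fun v => ~~ side v) E.
Proof.
move=> e /Hbip[u [w [su sw ->]]]; exists w, u.
by rewrite sw negbK su setUC.
Qed.

Lemma edge_eq2 e x y : e \in E -> x \in e -> y \in e -> y != x -> e = [set x; y].
Proof.
move=> eE xe + nyx; have [z [_ ->]] := other_endpoint Hbip eE xe.
by move/set2_other/(_ nyx) ->.
Qed.

Lemma pref_trans v x y z : dom v x -> dom v y -> dom v z ->
  pref v x y -> pref v y z -> pref v x z.
Proof. by case: (Hpref v) => trans _ _; apply: trans. Qed.

Lemma pref_refl v x : dom v x -> pref v x x.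
Proof. by case: (Hpref v) => _ total _ dx; have := total x x dx dx; rewrite orbb. Qed.

Lemma strict_prefE v x y : dom v x -> dom v y -> strict v x y = ~~ pref v y x.
Proof.
case: (Hpref v) => _ total _ dx dy; rewrite /strict_pref.
by have := total x y dx dy; case: (pref v x y); case: (pref v y x).
Qed.

Lemma strict_pref_le_trans v x y z : dom v x -> dom v y -> dom v z ->
  strict v x y -> pref v y z -> strict v x z.
Proof.
move=> dx dy dz; rewrite !strict_prefE // => nyx yz.
by apply: contra nyx; apply: pref_trans.
Qed.

Lemma strict_None v x : dom v x -> ~~ strict v None x.
Proof.
case: x => [g /andP[gE vg]|_]; last by rewrite /strict_pref andbN.
by case: (Hpref v) => _ _ /(_ g gE vg) /andP[_ /negbTE]; rewrite /strict_pref => ->.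
Qed.

Lemma mate_some M v e : mate M v = Some e -> e \in M /\ v \in e.
Proof. by rewrite /mate; case: pickP => // g /andP[gM vg] [<-]. Qed.

Lemma mate_in M v e : is_matching E M -> e \in M -> v \in e -> mate M v = Some e.
Proof.
case=> _ le1 eM ve; rewrite /mate; case: pickP => [g /andP[gM vg]|/(_ e)].
  by congr Some; apply: (card_le1_eqP (le1 v)); rewrite inE ?gM ?vg ?eM ?ve.
by rewrite /= eM ve.
Qed.

Lemma mate_eqE M v e : is_matching E M -> v \in e -> (mate M v == Some e) = (e \in M).
Proof.
move=> Mm ve; apply/eqP/idP => [/mate_some[]//|eM].
exact: mate_in.
Qed.

Lemma mate_dom M v : M \subset E -> dom v (mate M v).
Proof.
move=> ME; case h: (mate M v) => [e|//]; have [eM ve] := mate_some h.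
by rewrite /= (subsetP ME _ eM) ve.
Qed.

Lemma stable_matching M : stable M -> is_matching E M.
Proof. by case. Qed.

Lemma stable_sub M : stable M -> M \subset E.
Proof. by case=> [[]]. Qed.

Lemma stable_weak_block_tie M e w : stable M -> weakly_blocks pref E M e ->
  w \in e -> ~~ strict w (Some e) (mate M w).
Proof.
case=> _ noE1 noE2 wb we; apply/negP => ew.
have [eE _ _] := wb; case: (boolP (e \in E1)) => eE1; first exact: noE1 wb.
by apply: (noE2 e); [rewrite inE eE1 | split=> //; exists w].
Qed.

Definition prefers a b : {set V} := [set v | strict v (mate a v) (mate b v)].

Lemma prefers_mate a b v : b \subset E -> v \in prefers a b -> exists e, mate a v = Some e.
Proof.
move=> bE; rewrite inE; case: (mate a v) => [e _|]; first by exists e.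
by rewrite (negbTE (strict_None (mate_dom _ bE))).
Qed.

Lemma prefers_partner a b e x y : stable a -> stable b ->
  mate a x = Some e -> y \in e -> y != x -> x \in prefers a b -> y \in prefers b a.
Proof.
move=> sa sb xa ye nyx; rewrite !inE xa => xab.
have [ea xe] := mate_some xa; have eE := subsetP (stable_sub sa) e ea.
have ya : mate a y = Some e := mate_in (stable_matching sa) ea ye.
have eb : e \notin b.
  apply: contraTN xab => eb; rewrite (mate_in (stable_matching sb) eb xe).
  by rewrite /strict_pref andbN.
have dom_b v : dom v (mate b v) := mate_dom v (stable_sub sb).
have dom_e v : v \in e -> dom v (Some e) by move=> ve; rewrite /= eE ve.
apply: contraT; rewrite ya strict_prefE ?dom_e ?dom_b // negbK => yb.
have wb : weakly_blocks pref E b e.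
  split=> // v; rewrite {1}(edge_eq2 eE xe ye nyx) => /set2P[->|->] //.
  by case/andP: xab.
by move: (stable_weak_block_tie sb wb xe); rewrite xab.
Qed.

Definition partner M v : V :=
  if mate M v is Some e then odflt v [pick y in e | y != v] else v.

Lemma partner_mate M v e : M \subset E -> mate M v = Some e ->
  partner M v \in e /\ partner M v != v.
Proof.
move=> ME ve; have [eM vine] := mate_some ve; rewrite /partner ve.
case: pickP => [y /andP[ye nyv] //|none].
have [y [sy e_def]] := other_endpoint Hbip (subsetP ME e eM) vine.
have nyv : y != v by apply/eqP => yv; move: sy; rewrite yv; case: (side v).
by move: (none y); rewrite e_def !inE eqxx orbT nyv.
Qed.

Lemma partnerK M v e : is_matching E M -> mate M v = Some e -> partner M (partner M v) = v.
Proof.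
move=> Mm ve; have ME := Mm.1; have [pe npv] := partner_mate ME ve.
have [eM vine] := mate_some ve; have eE := subsetP ME e eM.
have [ppe nppp] := partner_mate ME (mate_in Mm eM pe).
by move: ppe; rewrite (edge_eq2 eE vine pe npv) => /set2P[// | pp]; rewrite pp eqxx in nppp.
Qed.

Lemma partner_inj_prefers a b : stable a -> stable b -> {in prefers a b &, injective (partner a)}.
Proof.
move=> sa sb; apply: can_in_inj => v /(prefers_mate (stable_sub sb))[e ve].
exact: partnerK (stable_matching sa) ve.
Qed.

Lemma partner_prefers_sub a b : stable a -> stable b ->
  partner a @: prefers a b \subset prefers b a.
Proof.
move=> sa sb; apply/subsetP => _ /imsetP[v vab ->].
have [e ve] := prefers_mate (stable_sub sb) vab.
have [pe npv] := partner_mate (stable_sub sa) ve.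
exact: prefers_partner sa sb ve pe npv vab.
Qed.

Lemma partner_prefers a b : stable a -> stable b -> partner a @: prefers a b = prefers b a.
Proof.
move=> sa sb; apply: (imset_eq_of_inj_in (g := partner b)).
- exact: partner_inj_prefers.
- exact: partner_prefers_sub.
- exact: partner_inj_prefers.
- exact: partner_prefers_sub.
Qed.

Lemma prefers_flip a b e x y : stable a -> stable b ->
  mate a x = Some e -> y \in e -> y != x -> (x \in prefers a b) = (y \in prefers b a).
Proof.
move=> sa sb xa ye nyx; apply/idP/idP; first exact: (prefers_partner sa sb xa ye nyx).
rewrite -(partner_prefers sa sb) => /imsetP[z zab yz].
have [g zg] := prefers_mate (stable_sub sb) zab.
have [pg npz] := partner_mate (stable_sub sa) zg; rewrite -yz in pg npz.
have [ea xe] := mate_some xa; have [ga zinG] := mate_some zg.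
have ge : g = e.
  by move: (mate_in (stable_matching sa) ga pg); rewrite (mate_in (stable_matching sa) ea ye) => -[].
move: zinG; rewrite ge (edge_eq2 (subsetP (stable_sub sa) e ea) xe ye nyx).
by case/set2P=> [<- // | zy]; rewrite zy eqxx in npz.
Qed.

Definition best_mate mu sigma v :=
  if v \in prefers sigma mu then mate sigma v else mate mu v.
Definition worst_mate mu sigma v :=
  if v \in prefers mu sigma then mate sigma v else mate mu v.

Lemma best_worst_mate_edge mu sigma e x y : stable mu -> stable sigma ->
    e \in E -> x \in e -> y \in e -> y != x ->
  (best_mate mu sigma x == Some e) = (worst_mate mu sigma y == Some e).
Proof.
move=> smu ssi eE xe ye nyx.
have [mu_m si_m] := (stable_matching smu, stable_matching ssi).
have flip : (e \in mu) || (e \in sigma) -> (x \in prefers sigma mu) = (y \in prefers mu sigma).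
  case/orP=> [emu|esi].
  - by rewrite (prefers_flip smu ssi (mate_in mu_m emu ye) xe) // eq_sym.
  - exact: (prefers_flip ssi smu (mate_in si_m esi xe) ye).
rewrite /best_mate /worst_mate.
case: (boolP ((e \in mu) || (e \in sigma))) => [/flip ->|].
  by case: ifP; rewrite !mate_eqE.
rewrite negb_or => /andP[/negbTE emu /negbTE esi].
by do 2 case: ifP; rewrite !mate_eqE ?emu ?esi.
Qed.

Lemma meet_atE mu sigma v : stable mu -> stable sigma ->
  meet_at pref mu sigma v = best_mate mu sigma v.
Proof.
move=> smu ssi; have [dmu dsi] := (mate_dom v (stable_sub smu), mate_dom v (stable_sub ssi)).
by rewrite /meet_at /best_mate inE strict_prefE //; case: ifP.
Qed.

Lemma join_atE mu sigma v : stable mu -> stable sigma ->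
  join_at pref mu sigma v = worst_mate mu sigma v.
Proof.
move=> smu ssi; have [dmu dsi] := (mate_dom v (stable_sub smu), mate_dom v (stable_sub ssi)).
by rewrite /join_at /worst_mate inE strict_prefE //; case: ifP.
Qed.

Lemma pref_best_mate mu sigma v : stable mu -> stable sigma ->
  pref v (best_mate mu sigma v) (mate mu v) && pref v (best_mate mu sigma v) (mate sigma v).
Proof.
move=> smu ssi; have [dmu dsi] := (mate_dom v (stable_sub smu), mate_dom v (stable_sub ssi)).
rewrite /best_mate inE; case: ifP => [/andP[-> _]|]; first by rewrite pref_refl.
by rewrite strict_prefE // => /negbFE ->; rewrite pref_refl.
Qed.

Definition edges_of (c : V -> option {set V}) : {set {set V}} :=
  [set e | [exists v, side v && (c v == Some e)]].

Lemma eq_edges_of c c' : (forall v, side v -> c v = c' v) -> edges_of c = edges_of c'.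
Proof.
move=> cc'; apply/setP => e; rewrite !inE; apply: eq_existsb => v.
by case: (boolP (side v)) => //= sv; rewrite cc'.
Qed.

Section EdgesOfChoice.
Variable c : V -> option {set V}.
Hypothesis c_edge : forall v e, c v = Some e -> e \in E /\ v \in e.
Hypothesis c_agree : forall v x e, c v = Some e -> x \in e -> c x = Some e.

Lemma mem_edges_of v e : (e \in edges_of c) && (v \in e) = (c v == Some e).
Proof.
rewrite /edges_of inE; apply/andP/eqP => [[/existsP[u /andP[_ /eqP ue]] ve] | ve].
  exact: c_agree ue ve.
have [eE vine] := c_edge ve; split=> //.
have [u [w [su _ e_def]]] := Hbip eE.
have ue : u \in e by rewrite e_def !inE eqxx.
by apply/existsP; exists u; rewrite su (c_agree ve ue) eqxx.
Qed.

Lemma mate_edges_of v : mate (edges_of c) v = c v.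
Proof.
rewrite /mate; case: pickP => [e /[!mem_edges_of] /eqP -> //|none].
by case cv: (c v) => [e|//]; move: (none e); rewrite mem_edges_of cv eqxx.
Qed.

Lemma edges_of_matching : is_matching E (edges_of c).
Proof.
split.
  by apply/subsetP => e; rewrite inE => /existsP[u /andP[_ /eqP /c_edge[]]].
move=> v; apply/card_le1_eqP => e f; rewrite in_set mem_edges_of in_set mem_edges_of.
by move=> /eqP -> /eqP [].
Qed.

End EdgesOfChoice.

Lemma blocks_transfer M c e x y : stable c -> M \subset E ->
    weakly_blocks pref E M e -> e = [set x; y] ->
    pref x (mate M x) (mate c x) -> mate M y = mate c y ->
  weakly_blocks pref E c e /\ (strongly_blocks pref E M e -> strongly_blocks pref E c e).
Proof.
move=> sc ME [eE eM e_ge] e_def xMc yMc.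
have dM v : dom v (mate M v) := mate_dom v ME.
have dc v : dom v (mate c v) := mate_dom v (stable_sub sc).
have de v : v \in e -> dom v (Some e) by move=> ve; rewrite /= eE ve.
have Mc v : v \in e -> pref v (mate M v) (mate c v).
  by rewrite {1}e_def => /set2P[->|->] //; rewrite yMc pref_refl.
have ye : y \in e by rewrite e_def !inE eqxx orbT.
have ec : e \notin c.
  apply: contra eM => ec; have := mate_in (stable_matching sc) ec ye.
  by rewrite -yMc => /mate_some[].
have wb : weakly_blocks pref E c e.
  by split=> // v ve; apply: pref_trans (de v ve) (dM v) (dc v) (e_ge v ve) (Mc v ve).
split=> // -[_ [w [we eMw]]]; split=> //; exists w; split=> //.
exact: strict_pref_le_trans (de w we) (dM w) (dc w) eMw (Mc w we).
Qed.

Lemma stable_of_mates mu sigma M s : bipartite_edges s E ->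
    stable mu -> stable sigma -> is_matching E M ->
    (forall v, mate M v = mate mu v \/ mate M v = mate sigma v) ->
    (forall v, s v -> pref v (mate M v) (mate mu v) && pref v (mate M v) (mate sigma v)) ->
  stable M.
Proof.
move=> bip smu ssi Mm M_mates M_ge.
have transfer e : weakly_blocks pref E M e -> exists2 c, stable c &
    weakly_blocks pref E c e /\ (strongly_blocks pref E M e -> strongly_blocks pref E c e).
  move=> wb; have [eE _ _] := wb; have [x [y [sx _ e_def]]] := bip e eE.
  have /andP[x_mu x_sigma] := M_ge x sx.
  by case: (M_mates y) => yM; [exists mu | exists sigma] => //;
    apply: blocks_transfer Mm.1 wb e_def _ yM.
split=> // e.
  by move=> eE1 /transfer[c [_ noE1 _] [wb _]]; apply: noE1 eE1 wb.
by move=> eE2 sb; have [c [_ _ noE2] [_ /(_ sb)]] := transfer e sb.1; apply: noE2.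
Qed.

Lemma stable_edges_of_best_worst mu sigma s : bipartite_edges s E ->
    stable mu -> stable sigma ->
  stable (edges_of (fun v => if s v then best_mate mu sigma v else worst_mate mu sigma v)).
Proof.
move=> bip smu ssi; set c := fun v => _.
have c_mates v : c v = mate mu v \/ c v = mate sigma v.
  by rewrite /c /best_mate /worst_mate; do 2 case: ifP => _; auto.
have c_edge v e : c v = Some e -> e \in E /\ v \in e.
  by case: (c_mates v) => -> /mate_some[eM ve]; split=> //;
    [apply: subsetP (stable_sub smu) _ eM | apply: subsetP (stable_sub ssi) _ eM].
have c_agree v x e : c v = Some e -> x \in e -> c x = Some e.
  move=> ve xe; have [eE vine] := c_edge v e ve.
  have [->//|nxv] := eqVneq x v.
  apply/eqP; move/eqP: ve; rewrite /c (bipartite_sideN bip eE vine xe nxv).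
  case: (s v) => /=.
  - by rewrite (best_worst_mate_edge smu ssi eE vine xe nxv).
  - by rewrite -(best_worst_mate_edge smu ssi eE xe vine) // eq_sym.
apply: (stable_of_mates bip smu ssi (edges_of_matching c_edge c_agree)) => v;
  rewrite mate_edges_of //.
by move=> sv; rewrite /c sv pref_best_mate.
Qed.

End NonUniformStability.

Theorem lemma5p3 (V : finType) (side : V -> bool) (E E1 : {set {set V}})
  (pref : V -> option {set V} -> option {set V} -> bool)
  (mu sigma : {set {set V}}) :
  bipartite_edges side E ->
  E1 \subset E ->
  pref_ok E pref ->
  nonuniformly_stable pref E E1 mu ->
  nonuniformly_stable pref E E1 sigma ->
  nonuniformly_stable pref E E1 (meetM pref side mu sigma) /\
  nonuniformly_stable pref E E1 (joinM pref side mu sigma).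
Proof.
move=> bip _ pref_E smu ssi.
have meetE : meetM pref side mu sigma = edges_of side (fun v =>
    if side v then best_mate pref mu sigma v else worst_mate pref mu sigma v).
  by apply: eq_edges_of => v sv; rewrite sv (meet_atE pref_E _ smu ssi).
have joinE : joinM pref side mu sigma = edges_of side (fun v =>
    if ~~ side v then best_mate pref mu sigma v else worst_mate pref mu sigma v).
  by apply: eq_edges_of => v sv; rewrite sv (join_atE pref_E _ smu ssi).
rewrite meetE joinE; split; apply: stable_edges_of_best_worst => //.
exact: bipartite_edgesN.
Qed.
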